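(* Let $p_1,\dots,p_r$ be pairwise distinct prime numbers, $\alpha_1,\dots,\alpha_r$ positive integers, and $k_i=p_i^{\alpha_i}$. Then the ring $A=\mathbb{Z}_{k_1}\times\mathbb{Z}_{k_2}\times\cdots\times\mathbb{Z}_{k_r}$ (direct product with componentwise operations) is a BL-ring.
   Context: For a commutative unitary ring $R$, its ideals $Id(R)$ form a residuated lattice $(Id(R),\cap,+,\otimes,\rightarrow,\{0\},R)$, ordered by inclusion, where $I+J$ is the ideal sum, $I\otimes J$ the ideal product, and $I\rightarrow J=(J:I)=\{x\in R: xI\subseteq J\}$. A BL-algebra is a residuated lattice satisfying prelinearity $(x\rightarrow y)\vee(y\rightarrow x)=1$ and divisibility $x\odot(x\rightarrow y)=x\wedge y$. A BL-ring is a commutative unitary ring whose lattice of ideals, with this structure, is a BL-algebra. *)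

From HB Require Import structures.
From mathcomp Require Import all_boot all_order all_algebra.
Set Implicit Arguments. Unset Strict Implicit. Unset Printing Implicit Defensive.
Import GRing.Theory.
Local Open Scope ring_scope.

Section DProd.
Variables (I : finType) (R : I -> comPzRingType).

Definition dprod_ring := {dffun forall i, R i}.

HB.instance Definition _ := Choice.on dprod_ring.

Definition dp_zero : dprod_ring := [ffun i => 0].
Definition dp_opp (x : dprod_ring) : dprod_ring := [ffun i => - x i].
Definition dp_add (x y : dprod_ring) : dprod_ring := [ffun i => x i + y i].
Definition dp_one : dprod_ring := [ffun i => 1].
Definition dp_mul (x y : dprod_ring) : dprod_ring := [ffun i => x i * y i].

Lemma dp_addA : associative dp_add.
Proof. by move=> x y z; apply/ffunP => i; rewrite !ffunE addrA. Qed.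
Lemma dp_addC : commutative dp_add.
Proof. by move=> x y; apply/ffunP => i; rewrite !ffunE addrC. Qed.
Lemma dp_add0 : left_id dp_zero dp_add.
Proof. by move=> x; apply/ffunP => i; rewrite !ffunE add0r. Qed.
Lemma dp_addN : left_inverse dp_zero dp_opp dp_add.
Proof. by move=> x; apply/ffunP => i; rewrite !ffunE addNr. Qed.

HB.instance Definition _ :=
  GRing.isZmodule.Build dprod_ring dp_addA dp_addC dp_add0 dp_addN.

Lemma dp_mulA : associative dp_mul.
Proof. by move=> x y z; apply/ffunP => i; rewrite !ffunE mulrA. Qed.
Lemma dp_mulC : commutative dp_mul.
Proof. by move=> x y; apply/ffunP => i; rewrite !ffunE mulrC. Qed.
Lemma dp_mul1 : left_id dp_one dp_mul.
Proof. by move=> x; apply/ffunP => i; rewrite !ffunE mul1r. Qed.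
Lemma dp_mulDl : left_distributive dp_mul (@GRing.add dprod_ring).
Proof. by move=> x y z; apply/ffunP => i; rewrite !ffunE mulrDl. Qed.

HB.instance Definition _ :=
  GRing.Zmodule_isComPzRing.Build dprod_ring dp_mulA dp_mulC dp_mul1 dp_mulDl.

End DProd.

Definition Zprod (r : nat) (k : 'I_r -> nat) : comPzRingType :=
  dprod_ring (fun i : 'I_r => 'Z_(k i)).

Section Ideals.
Variable R : comPzRingType.

Definition is_ideal (I : R -> Prop) : Prop :=
  [/\ I 0, (forall x y, I x -> I y -> I (x + y)) & (forall a x, I x -> I (a * x))].

Definition ideal_top : R -> Prop := fun _ => True.
Definition ideal_bot : R -> Prop := fun x => x = 0.

Definition ideal_meet (I J : R -> Prop) : R -> Prop := fun x => I x /\ J x.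

Definition ideal_sum (I J : R -> Prop) : R -> Prop :=
  fun x => exists a b, [/\ I a, J b & x = a + b].

Definition ideal_prod (I J : R -> Prop) : R -> Prop :=
  fun x => forall K, is_ideal K -> (forall a b, I a -> J b -> K (a * b)) -> K x.

Definition ideal_res (I J : R -> Prop) : R -> Prop :=
  fun x => forall a, I a -> J (x * a).

Definition ideal_eq (I J : R -> Prop) : Prop := forall x, I x <-> J x.

(* BL-ring: the residuated lattice of ideals satisfies prelinearity and
   divisibility. *)
Definition BL_ring : Prop :=
  (forall I J, is_ideal I -> is_ideal J ->
     ideal_eq (ideal_sum (ideal_res I J) (ideal_res J I)) ideal_top) /\
  (forall I J, is_ideal I -> is_ideal J ->
     ideal_eq (ideal_prod I (ideal_res I J)) (ideal_meet I J)).

End Ideals.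

From mathcomp Require Import all_boot all_order all_algebra.
From Stdlib Require Import Classical.
Set Implicit Arguments. Unset Strict Implicit. Unset Printing Implicit Defensive.
Import GRing.Theory.
Local Open Scope ring_scope.

(* In Z_(p^a) any two elements are comparable for divisibility (each
   generates the same ideal as its gcd with p^a), so, the ring being finite,
   its ideals are principal and totally ordered.  An ideal of a
   finite product is the product of its projections, and both BL axioms can
   be checked one component at a time using the idempotents e_i.  In a
   component where proj_i I <= proj_i J the idempotent e_i lies in (J : I);
   otherwise proj_i I = (g) contains proj_i J, and an element y of I /\ J
   factors as g * c with e_i c in (J : I). *)

Section IdealFacts.
Variable R : comPzRingType.

Definition ideal_sub (A B : R -> Prop) : Prop := forall x, A x -> B x.

Definition dvd_chain : Prop := forall x y : R, exists c, y = c * x \/ x = c * y.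

Definition principal_ring : Prop :=
  forall A : R -> Prop, is_ideal A -> exists2 g, A g & forall x, A x -> exists c, x = c * g.

Section Ideal.
Variables (A : R -> Prop) (hA : is_ideal A).

Lemma ideal0 : A 0.
Proof. by case: hA. Qed.

Lemma idealD x y : A x -> A y -> A (x + y).
Proof. by case: hA => _ + _; apply. Qed.

Lemma idealMl a x : A x -> A (a * x).
Proof. by case: hA => _ _; apply. Qed.

Lemma idealMr a x : A x -> A (x * a).
Proof. by rewrite mulrC; apply: idealMl. Qed.

Lemma ideal_big (J : Type) (s : seq J) (F : J -> R) :
  (forall j, A (F j)) -> A (\sum_(j <- s) F j).
Proof. by move=> AF; elim/big_ind: _ => //; [apply: ideal0 | apply: idealD]. Qed.

End Ideal.

Lemma res_ideal (A B : R -> Prop) : is_ideal B -> is_ideal (ideal_res A B).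
Proof.
move=> hB; split.
- by move=> a _; rewrite mul0r; apply: ideal0.
- by move=> x y Hx Hy a Aa; rewrite mulrDl; apply: idealD => //; [apply: Hx | apply: Hy].
- by move=> a x Hx b Ab; rewrite -mulrA; apply: idealMl => //; apply: Hx.
Qed.

Lemma sum_ideal (A B : R -> Prop) :
  is_ideal A -> is_ideal B -> is_ideal (ideal_sum A B).
Proof.
move=> hA hB; split.
- by exists 0, 0; split; rewrite ?addr0 //; apply: ideal0.
- move=> _ _ [a [b [Aa Bb ->]]] [a' [b' [Aa' Bb' ->]]].
  by exists (a + a'), (b + b'); split; [apply: idealD | apply: idealD | rewrite addrACA].
- move=> c _ [a [b [Aa Bb ->]]].
  by exists (c * a), (c * b); split; rewrite ?mulrDr //; apply: idealMl.
Qed.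

Lemma meet_ideal (A B : R -> Prop) :
  is_ideal A -> is_ideal B -> is_ideal (ideal_meet A B).
Proof.
move=> hA hB; split.
- by split; apply: ideal0.
- by move=> x y [Ax Bx] [Ay By]; split; apply: idealD.
- by move=> a x [Ax Bx]; split; apply: idealMl.
Qed.

Lemma prod_res_sub_meet (A B : R -> Prop) : is_ideal A -> is_ideal B ->
  ideal_sub (ideal_prod A (ideal_res A B)) (ideal_meet A B).
Proof.
move=> hA hB x; apply; first exact: meet_ideal.
by move=> a b Aa Hb; split; [apply: idealMr | rewrite mulrC; apply: Hb].
Qed.

Lemma principal_chain_ideals_total (A B : R -> Prop) :
  principal_ring -> dvd_chain -> is_ideal A -> is_ideal B ->
  ideal_sub A B \/ ideal_sub B A.
Proof.
move=> hpr hch hA hB.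
have [a Aa genA] := hpr A hA; have [b Bb genB] := hpr B hB.
have [c [Eb | Ea]] := hch a b.
- by right=> x /genB [d ->]; rewrite Eb mulrA; apply: idealMl.
- by left=> x /genA [d ->]; rewrite Ea mulrA; apply: idealMl.
Qed.

End IdealFacts.

Lemma finite_chain_principal (R : finComPzRingType) :
  dvd_chain R -> principal_ring R.
Proof.
move=> hch A hA.
pose mults (g : R) := [set c * g | c : R].
suff: forall m g, A g -> (#|~: mults g| < m)%N ->
    exists2 g, A g & forall x, A x -> exists c, x = c * g.
  by apply; [apply: ideal0 | apply: ltnSn].
elim=> [|m IHm] g Ag //= card_g.
have [gen_g | ] := classic (forall x, A x -> x \in mults g).
  by exists g => // x /gen_g /imsetP [c _ ->]; exists c.
case/not_all_ex_not=> x /(imply_to_and (A x)) [Ax x_notin].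
have [c [x_mul | g_mul]] := hch g x.
  by case: x_notin; apply/imsetP; exists c.
have mults_proper : mults g \proper mults x.
  apply/properP; split; last by exists x; [apply/imsetP; exists 1; rewrite ?mul1r | apply/negP].
  by apply/subsetP=> _ /imsetP [d _ ->]; rewrite g_mul mulrA; apply/imsetP; exists (d * c).
apply: (IHm x Ax); rewrite -properC in mults_proper.
exact: leq_trans (proper_card mults_proper) _.
Qed.

Section ZpChain.
Variable n : nat.
Hypothesis n_gt1 : (1 < n)%N.

Lemma Zp_gcd_mul (x : 'Z_n) : exists c : 'Z_n, (gcdn x n)%:R = c * x.
Proof.
have n0 : (n%:R : 'Z_n) = 0 by rewrite -Zp_nat_mod // modnn.
have [x0 | x_gt0] := posnP (val x).
  by exists 0; rewrite mul0r x0 gcd0n.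
have [u v Euv _] := egcdnP n x_gt0.
by exists u%:R; rewrite -{2}(natr_Zp x) -natrM Euv natrD natrM n0 mulr0 add0r.
Qed.

Lemma Zp_dvd_gcd (x y : 'Z_n) : (gcdn x n %| y)%N -> exists c : 'Z_n, y = c * x.
Proof.
move=> dvd_y; have [u Eu] := Zp_gcd_mul x.
exists ((y %/ gcdn x n)%:R * u).
by rewrite -mulrA -Eu -natrM divnK // natr_Zp.
Qed.

End ZpChain.

Lemma Zp_pfactor_dvd_chain (p a : nat) : prime p -> (0 < a)%N -> dvd_chain 'Z_(p ^ a).
Proof.
move=> p_pr a_gt0; set n := (p ^ a)%N.
have n_gt1 : (1 < n)%N by rewrite -(expn0 p) ltn_exp2l ?prime_gt1.
have dvd_total d1 d2 : (d1 %| n)%N -> (d2 %| n)%N -> (d1 %| d2)%N || (d2 %| d1)%N.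
  move=> /(dvdn_pfactor _ _ p_pr) [s _ ->] /(dvdn_pfactor _ _ p_pr) [t _ ->].
  by case: (leqP s t) => st; [rewrite dvdn_exp2l | rewrite orbC dvdn_exp2l // ltnW].
move=> x y; case/orP: (dvd_total _ _ (dvdn_gcdr x n) (dvdn_gcdr y n)) => H.
- by have [c Ec] := Zp_dvd_gcd n_gt1 (dvdn_trans H (dvdn_gcdl _ _)); exists c; left.
- by have [c Ec] := Zp_dvd_gcd n_gt1 (dvdn_trans H (dvdn_gcdl _ _)); exists c; right.
Qed.

Section Product.
Variables (I : finType) (R : I -> comPzRingType).
Local Notation P := (dprod_ring R).

Lemma dprod_addE (x y : P) i : (x + y) i = x i + y i.
Proof. by rewrite ffunE. Qed.

Lemma dprod_mulE (x y : P) i : (x * y) i = x i * y i.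
Proof. by rewrite ffunE. Qed.

Lemma dprod_sumE (s : seq I) (F : I -> P) i : (\sum_(j <- s) F j) i = \sum_(j <- s) F j i.
Proof.
elim: s => [|j s IHs]; first by rewrite !big_nil ffunE.
by rewrite !big_cons dprod_addE IHs.
Qed.

Definition dsingle i (c : R i) : P := [ffun j => dfwith (fun j => 0 : R j) c j].
Arguments dsingle : clear implicits.

Lemma dsingle_in i c : dsingle i c i = c.
Proof. by rewrite ffunE dfwith_in. Qed.

Lemma dsingle_out i j c : i != j -> dsingle i c j = 0.
Proof. by move=> ij; rewrite ffunE dfwith_out. Qed.

Lemma dsingle_mul i c (x : P) : dsingle i c * x = dsingle i (c * x i).
Proof.
apply/ffunP=> j; rewrite dprod_mulE; have [<- | ij] := eqVneq i j.
  by rewrite !dsingle_in.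
by rewrite !dsingle_out // mul0r.
Qed.

Lemma dsingle_sum (x : P) : x = \sum_i dsingle i (x i).
Proof.
apply/ffunP=> j; rewrite dprod_sumE (bigD1 j) //= dsingle_in big1 ?addr0 //.
by move=> i ij; rewrite dsingle_out // eq_sym.
Qed.

Definition proj_ideal (A : P -> Prop) i (a : R i) : Prop := exists2 x, A x & x i = a.
Arguments proj_ideal : clear implicits.

Section Projection.
Variables (A : P -> Prop) (hA : is_ideal A).

Lemma proj_ideal_ideal i : is_ideal (proj_ideal A i).
Proof.
split.
- by exists 0; [apply: ideal0 | rewrite ffunE].
- move=> _ _ [x Ax <-] [y Ay <-].
  by exists (x + y); [apply: idealD | rewrite dprod_addE].
- move=> a _ [x Ax <-].
  by exists (dsingle i a * x); [apply: idealMl | rewrite dsingle_mul dsingle_in].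
Qed.

Lemma dsingle_ideal i a : proj_ideal A i a -> A (dsingle i a).
Proof. by case=> x Ax <-; rewrite -[x i]mul1r -dsingle_mul; apply: idealMl. Qed.

Lemma ideal_componentwise (x : P) : (forall i, A (dsingle i (x i))) -> A x.
Proof. by move=> Ax; rewrite [x]dsingle_sum; apply: ideal_big. Qed.

End Projection.

Lemma dsingle1_res (A B : P -> Prop) i : is_ideal B ->
  ideal_sub (proj_ideal A i) (proj_ideal B i) -> ideal_res A B (dsingle i 1).
Proof.
move=> hB AB x Ax; rewrite dsingle_mul mul1r; apply: dsingle_ideal => //.
by apply: AB; exists x.
Qed.

Hypotheses (R_principal : forall i, principal_ring (R i))
           (R_chain : forall i, dvd_chain (R i)).

Lemma proj_ideals_total (A B : P -> Prop) i : is_ideal A -> is_ideal B ->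
  ideal_sub (proj_ideal A i) (proj_ideal B i) \/ ideal_sub (proj_ideal B i) (proj_ideal A i).
Proof.
move=> hA hB; apply: principal_chain_ideals_total => //;
by apply: proj_ideal_ideal.
Qed.

Lemma dprod_prelinear (A B : P -> Prop) x : is_ideal A -> is_ideal B ->
  ideal_sum (ideal_res A B) (ideal_res B A) x.
Proof.
move=> hA hB; have hAB := res_ideal A hB; have hBA := res_ideal B hA.
rewrite -[x]mulr1; apply: idealMl; first exact: sum_ideal.
apply: ideal_componentwise => [|i]; first exact: sum_ideal.
rewrite ffunE; have [AB | BA] := proj_ideals_total i hA hB.
- by exists (dsingle i 1), 0; rewrite addr0; split; [apply: dsingle1_res | apply: ideal0 |].
- by exists 0, (dsingle i 1); rewrite add0r; split; [apply: ideal0 | apply: dsingle1_res |].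
Qed.

Lemma dprod_meet_sub_prod (A B : P -> Prop) : is_ideal A -> is_ideal B ->
  ideal_sub (ideal_meet A B) (ideal_prod A (ideal_res A B)).
Proof.
move=> hA hB y [Ay By] K hK K_prod; apply: (ideal_componentwise hK) => i.
have By_i : proj_ideal B i (y i) by exists y.
have [AB | BA] := proj_ideals_total i hA hB.
  rewrite -[y i]mul1r -dsingle_mul mulrC.
  by apply: K_prod => //; apply: dsingle1_res.
have [_ [g Ag <-] gen] := R_principal (proj_ideal_ideal hA i).
have [c Ec] := gen _ (BA _ By_i).
rewrite Ec -dsingle_mul mulrC; apply: K_prod => // w Aw.
rewrite dsingle_mul; apply: dsingle_ideal => //.
have [d ->] := gen (w i) (ex_intro2 _ _ w Aw erefl).
by rewrite mulrCA -Ec; apply: idealMl => //; apply: proj_ideal_ideal.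
Qed.

Theorem dprod_BL_ring : BL_ring P.
Proof.
split=> A B hA hB x; split.
- by [].
- by move=> _; apply: dprod_prelinear.
- exact: prod_res_sub_meet.
- exact: dprod_meet_sub_prod.
Qed.

End Product.

Local Close Scope ring_scope.

(* The primes need not be distinct: the argument is componentwise. *)
Theorem corollary3p9 (r : nat) (p alpha : 'I_r -> nat) :
  (forall i, prime (p i)) ->
  (forall i j, i != j -> p i != p j) ->
  (forall i, 0 < alpha i) ->
  BL_ring (Zprod (fun i => p i ^ alpha i)).
Proof.
move=> p_prime _ alpha_gt0.
have chain i : dvd_chain 'Z_(p i ^ alpha i) by apply: Zp_pfactor_dvd_chain.
by apply: dprod_BL_ring => i; [apply: finite_chain_principal |]; apply: chain.
Qed.
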